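(* Let $\mathcal{B}\subseteq\mathcal{P}(X)$ be a countable admissible algebra, let $\mathcal{S}\subseteq\mathcal{N}(\mathcal{B})$ be a countable collection and let $\varepsilon>0$. Then there is a set $A\subseteq X$ such that: (i) the algebra generated by $\mathcal{B}\cup\{A\}$ is admissible; (ii) for every $\{B_k\}_{k\in\omega}\in\mathcal{S}$ there is $k_0\in\omega$ such that $(B_{k_0})_{|n}\subseteq A_{|n}$ for all but finitely many $n\in\omega$; (iii) $\mu(A)\le\varepsilon$.
   Context: $\omega=\{0,1,2,\dots\}$, $2^\omega$ is the Cantor set, $\lambda$ is the usual product probability measure on $2^\omega$, and $\mathrm{Clop}(2^\omega)$ is the algebra of clopen subsets of $2^\omega$. Let $X=\omega\times 2^\omega$. For $B\subseteq X$ and $n\in\omega$, $B_{|n}=\{t\in 2^\omega:(n,t)\in B\}$. A set $B\subseteq X$ is admissible if $B_{|n}\in\mathrm{Clop}(2^\omega)$ for all $n\in\omega$ and $\lim_n\lambda(B_{|n})$ exists; in that case $\mu(B):=\lim_n\lambda(B_{|n})$. An algebra of subsets of $X$ is admissible if all its elements are admissible. For an admissible algebra $\mathcal{B}$, $\mathcal{N}(\mathcal{B})$ is the collection of all decreasing sequences $\{B_k\}_{k\in\omega}$ in $\mathcal{B}$ with $\lim_k\mu(B_k)=0$. *)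

From HB Require Import structures.
From mathcomp Require Import all_boot all_order all_algebra.
From mathcomp Require Import all_classical all_reals.
From mathcomp Require Import topology normedtype sequences cantor.
Set Implicit Arguments. Unset Strict Implicit. Unset Printing Implicit Defensive.
Import Order.TTheory GRing.Theory Num.Theory.
Import numFieldTopology.Exports numFieldNormedType.Exports.
Local Open Scope classical_set_scope.
Local Open Scope ring_scope.

Definition cyl (N : nat) (s : {ffun 'I_N -> bool}) : set cantor_space :=
  [set t | forall i : 'I_N, t (nat_of_ord i) = s i].

Definition ncyl (C : set cantor_space) (N : nat) : nat :=
  #|[set s : {ffun 'I_N -> bool} | `[< cyl s `<=` C >] ]|.

(** The usual product (coin-tossing) probability measure lambda, given by its
    inner approximation by cylinders: lambda(C) = sup_N ncyl C N / 2^N.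
    On clopen (indeed on open) sets this coincides with the product measure. *)
Definition lam {R : realType} (C : set cantor_space) : R :=
  sup (range (fun N : nat => (ncyl C N)%:R / (2 ^+ N : R))).

Definition X := (nat * cantor_space)%type.
Definition sect (B : set X) (n : nat) : set cantor_space := [set t | B (n, t)].

Definition admissible {R : realType} (B : set X) : Prop :=
  (forall n, clopen (sect B n)) /\
  exists l : R, (fun n => lam (sect B n) : R) @ \oo --> l.

Definition mu {R : realType} (B : set X) : R :=
  limn (fun n => lam (sect B n) : R).

Definition set_algebra (F : set (set X)) : Prop :=
  [/\ F setT, (forall A, F A -> F (~` A)) &
      (forall A B, F A -> F B -> F (A `|` B))].

Definition gen_algebra (G : set (set X)) : set (set X) := smallest set_algebra G.

Definition admissible_algebra {R : realType} (F : set (set X)) : Prop :=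
  set_algebra F /\ forall B, F B -> admissible (R := R) B.

Definition Nseq {R : realType} (F : set (set X)) : set (nat -> set X) :=
  [set Bs | (forall k, F (Bs k)) /\ (forall k, Bs k.+1 `<=` Bs k) /\
            (fun k => mu (Bs k) : R) @ \oo --> (0 : R)].

(* Pick in the j-th sequence of S a set b_j of B with mu(b_j) <= eps/2^(j+1);
   the unions D_J of b_0, ..., b_(J-1) form an increasing chain in B with
   mu(D_J) <= eps.  Take A to be the diagonal set with sections
   A_n = (D_(J(n)))_n, where J(n) tends to infinity so slowly that at level n
   the measures lam((D_(J(n)) & C_i)_n) are within 1/(J(n)+1) of
   mu(D_(J(n)) & C_i) for the first J(n) sets C_i of an enumeration of B.
   Then lam((A & C)_n) tends to sup_J mu(D_J & C) for every C in B: from below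
   because the D_J increase, from above by the choice of J(n).  The algebra
   generated by B and A consists of the sets (A & C1) | (~A & C2), whose
   section measures are sums of such convergent sequences, because lam is
   additive on clopen sets: each is a union of cylinders of one fixed length. *)

From HB Require Import structures.
From mathcomp Require Import all_boot all_order all_algebra.
From mathcomp Require Import all_classical all_reals.
From mathcomp Require Import topology normedtype sequences cantor.
From mathcomp Require Import ring lra.
Import Order.TTheory GRing.Theory Num.Theory.
Import numFieldTopology.Exports numFieldNormedType.Exports.
Local Open Scope classical_set_scope.
Local Open Scope ring_scope.
Set Implicit Arguments. Unset Strict Implicit. Unset Printing Implicit Defensive.

Definition prefix_eq (N : nat) (t t' : cantor_space) :=
  forall i, (i < N)%N -> t i = t' i.

Lemma prefix_eq_sym N t t' : prefix_eq N t t' -> prefix_eq N t' t.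
Proof. by move=> tt' i /tt' ->. Qed.

Lemma prefix_eqW M N t t' : (M <= N)%N -> prefix_eq N t t' -> prefix_eq M t t'.
Proof. by move=> MN tt' i iM; apply: tt'; apply: leq_trans MN. Qed.

Lemma prefix_eq_trans N t t' t'' :
  prefix_eq N t t' -> prefix_eq N t' t'' -> prefix_eq N t t''.
Proof. by move=> tt' t't'' i iN; rewrite tt' // t't''. Qed.

Lemma nbhs_prefix_eq (t : cantor_space) N : nbhs t (prefix_eq N t).
Proof.
have tF := nbhs_filter t.
elim: N => [|N IH]; first by apply: (filterS _ (@filterT _ _ tF)) => t' _ i.
have tN : nbhs t [set t' : cantor_space | t' N = t N].
  by apply: (@proj_continuous nat (fun=> bool) N t [set t N]).
apply: filterS (filterI IH tN) => t' [tt' t'N] i.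
by rewrite ltnS leq_eqVlt => /orP[/eqP->|/tt' //]; rewrite t'N.
Qed.

Lemma nbhs_prefix_eqP (t : cantor_space) (U : set cantor_space) :
  nbhs t U -> exists N, prefix_eq N t `<=` U.
Proof.
pose G := filter_from [set: nat] (prefix_eq^~ t).
have GF : Filter G.
  apply: filter_from_filter; first by exists 0%N.
  move=> i j _ _; exists (maxn i j) => // t' tt'.
  by split; apply: prefix_eqW tt'; rewrite ?leq_maxl ?leq_maxr.
have : G --> t.
  apply/(@pointwise_cvgP nat bool G t GF) => i V /= Vti.
  by exists i.+1 => // t' tt'; rewrite /= -tt' //; exact: nbhs_singleton.
by move=> /[apply] -[N _ NU]; exists N.
Qed.

(* Local constancy of the indicator of a clopen set, made uniform by compactness. *)
Lemma clopen_prefix_stable (C : set cantor_space) : clopen C ->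
  exists N, forall t t', prefix_eq N t t' -> C t -> C t'.
Proof.
move=> [oC cC].
have local t : exists M, forall t', prefix_eq M t t' -> (C t <-> C t').
  have [Ct|nCt] := pselect (C t).
    have /nbhs_prefix_eqP[M MC] : nbhs t C by move: oC; rewrite openE; exact.
    by exists M => t' /MC.
  have /nbhs_prefix_eqP[M MC] : nbhs t (~` C).
    by move: (closed_openC cC); rewrite openE; exact.
  by exists M => t' /MC.
have [] := (compact_near_coveringP _).1 cantor_space_compact nat \oo
  (fun N t => forall t', prefix_eq N t t' -> (C t <-> C t')).
- move=> t _; have [M Mt] := local t.
  exists (prefix_eq M t, [set N | (M <= N)%N]).
    by split; [exact: nbhs_prefix_eq|exists M].
  move=> [t' N] [/= tt' MN] t'' t't''.
  apply: iff_trans (iff_sym (Mt _ tt')) (Mt _ _).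
  exact: prefix_eq_trans tt' (prefix_eqW MN t't'').
- move=> N _ NC; exists N => t t' tt'.
  by have /(_ t I t' tt') [] := NC N (leqnn N).
Qed.

Definition word_point N (s : {ffun 'I_N -> bool}) : cantor_space :=
  fun k => if insub k is Some j then s j else false.

Lemma cyl_word_point N (s : {ffun 'I_N -> bool}) : cyl s (word_point s).
Proof. by move=> i; rewrite /word_point valK. Qed.

Definition word_init N (s : {ffun 'I_N.+1 -> bool}) : {ffun 'I_N -> bool} :=
  [ffun j => s (widen_ord (leqnSn N) j)].

Definition word_rcons N (r : {ffun 'I_N -> bool}) (b : bool) : {ffun 'I_N.+1 -> bool} :=
  [ffun i : 'I_N.+1 => if insub (val i) is Some j then r j else b].

Definition word_split N (s : {ffun 'I_N.+1 -> bool}) := (word_init s, s ord_max).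

Lemma cyl_word_init N (s : {ffun 'I_N.+1 -> bool}) : cyl s `<=` cyl (word_init s).
Proof. by move=> t st j; rewrite ffunE -st. Qed.

Lemma word_init_rcons N r b : word_init (@word_rcons N r b) = r.
Proof. by apply/ffunP => j; rewrite !ffunE /= valK. Qed.

Lemma word_split_rcons N r b : word_split (@word_rcons N r b) = (r, b).
Proof. by rewrite /word_split word_init_rcons ffunE insubF //= ltnn. Qed.

Lemma word_split_inj N : injective (@word_split N).
Proof.
move=> s s' [ss' ss'_max]; apply/ffunP => i.
have [iN|] := ltnP i N.
  have -> : i = widen_ord (leqnSn N) (Ordinal iN) by apply: val_inj.
  by move: (congr1 (fun f : {ffun 'I_N -> bool} => f (Ordinal iN)) ss'); rewrite !ffunE.
rewrite leq_eqVlt ltnNge -ltnS ltn_ord orbF => /eqP iN.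
by have -> : i = ord_max by apply: val_inj.
Qed.

Definition inner_words (C : set cantor_space) N : {set {ffun 'I_N -> bool}} :=
  finset (fun s => `[< cyl s `<=` C >]).

Lemma ncylE C N : ncyl C N = #|inner_words C N|.
Proof.
apply: eq_card => s; rewrite inE; apply/idP/idP; rewrite in_setE //= => h.
by rewrite in_setE /=; apply/asboolP.
Qed.

Definition decided (C : set cantor_space) N :=
  forall s : {ffun 'I_N -> bool}, cyl s `<=` C \/ cyl s `<=` ~` C.

Lemma card_setX_bool N (V : {set {ffun 'I_N -> bool}}) :
  #|finset.setX V [set: bool]%SET| = (2 * #|V|)%N.
Proof. by rewrite cardsX cardsT card_bool mulnC. Qed.

Lemma card_word_split N (W : {set {ffun 'I_N.+1 -> bool}}) : #|@word_split N @: W| = #|W|.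
Proof. by apply: card_in_imset => s s' _ _ /word_split_inj. Qed.

Lemma card_inner_wordsS_ge C N :
  (2 * #|inner_words C N| <= #|inner_words C N.+1|)%N.
Proof.
rewrite -card_setX_bool -[#|inner_words C N.+1|]card_word_split.
apply: subset_leq_card; apply/fintype.subsetP => -[r b].
rewrite !inE /= andbT => /asboolP rC; apply/imsetP; exists (word_rcons r b).
  by rewrite inE; apply/asboolP => t /cyl_word_init; rewrite word_init_rcons; exact: rC.
by rewrite word_split_rcons.
Qed.

Lemma card_inner_wordsS C N : decided C N ->
  #|inner_words C N.+1| = (2 * #|inner_words C N|)%N.
Proof.
move=> dC; apply/eqP; rewrite eqn_leq card_inner_wordsS_ge andbT.
rewrite -card_setX_bool -[#|inner_words C N.+1|]card_word_split.
apply: subset_leq_card; apply/fintype.subsetP => _ /imsetP[s + ->].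
rewrite inE => /asboolP sC; rewrite !inE /= andbT; apply/asboolP.
case: (dC (word_init s)) => // nC.
by have := nC _ (cyl_word_init (cyl_word_point s)); have := sC _ (cyl_word_point s).
Qed.

Lemma decidedS C N : decided C N -> decided C N.+1.
Proof.
by move=> dC s; case: (dC (word_init s)) => CN; [left|right];
  apply: subset_trans (@cyl_word_init N s) CN.
Qed.

Lemma decidedW C M N : (M <= N)%N -> decided C M -> decided C N.
Proof.
elim: N => [|N IH]; first by rewrite leqn0 => /eqP ->.
by rewrite leq_eqVlt => /orP[/eqP -> //|/IH dC /dC /decidedS].
Qed.

Lemma decidedI C D N : decided C N -> decided D N -> decided (C `&` D) N.
Proof.
move=> dC dD s; case: (dC s) => sC; last by right => t /sC + [].
case: (dD s) => sD; last by right => t /sD + [].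
by left => t st; split; [exact: sC|exact: sD].
Qed.

Lemma decidedC C N : decided C N -> decided (~` C) N.
Proof. by move=> dC s; case: (dC s) => sC; [right => t /sC + []|left]. Qed.

Definition cylindrical (C : set cantor_space) := exists N, decided C N.

Lemma clopen_cylindrical C : clopen C -> cylindrical C.
Proof.
move=> /clopen_prefix_stable[N CN]; exists N => s.
have prefix_s t : cyl s t -> prefix_eq N (word_point s) t.
  move=> st i iN.
  by have := cyl_word_point s (Ordinal iN); have := st (Ordinal iN) => /= -> ->.
have [Cs|nCs] := pselect (C (word_point s)).
  by left => t /prefix_s /CN; apply.
by right => t /prefix_s /prefix_eq_sym /CN Ct /Ct.
Qed.

Lemma cylindricalI C D : cylindrical C -> cylindrical D -> cylindrical (C `&` D).
Proof.
move=> [M dC] [N dD]; exists (maxn M N).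
by apply: decidedI; apply: decidedW dC || apply: decidedW dD; rewrite ?leq_maxl ?leq_maxr.
Qed.

Lemma cylindricalC C : cylindrical C -> cylindrical (~` C).
Proof. by move=> [N dC]; exists N; exact: decidedC. Qed.

Lemma cylindricalU C D : cylindrical C -> cylindrical D -> cylindrical (C `|` D).
Proof.
move=> cC cD; rewrite -[C `|` D]setCK setCU.
by apply/cylindricalC/cylindricalI; exact: cylindricalC.
Qed.

Section Lambda.
Context {R : realType}.

Definition lam_level C N : R := (ncyl C N)%:R / 2 ^+ N.

Lemma lam_level_ge0 C N : 0 <= lam_level C N.
Proof. by rewrite divr_ge0 // exprn_ge0. Qed.

Lemma lam_levelE C N : (2 * ncyl C N)%:R / 2 ^+ N.+1 = lam_level C N.
Proof. by rewrite /lam_level natrM exprS; field; rewrite expf_neq0 // pnatr_eq0. Qed.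

Lemma le_lam_level C : {homo lam_level C : M N / (M <= N)%N >-> M <= N}.
Proof.
apply: homo_leq => [x|y x z|N]; [exact: lexx|exact: le_trans|].
rewrite -lam_levelE /lam_level !ncylE ler_pM2r ?ler_nat ?card_inner_wordsS_ge //.
by rewrite invr_gt0 exprn_gt0.
Qed.

Lemma lam_level_stable C N M : decided C N -> (N <= M)%N ->
  lam_level C M = lam_level C N.
Proof.
move=> dC; elim: M => [|M IH]; first by rewrite leqn0 => /eqP ->.
rewrite leq_eqVlt => /orP[/eqP -> //|]; rewrite ltnS => NM.
rewrite -IH // -[RHS]lam_levelE /lam_level !ncylE card_inner_wordsS //.
exact: decidedW NM dC.
Qed.

Lemma lam_decided C N : decided C N -> lam C = lam_level C N.
Proof.
move=> dC; have ub : ubound (range (lam_level C)) (lam_level C N).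
  move=> _ [M _ <-]; have [MN|NM] := leqP M N; first exact: le_lam_level.
  by rewrite (lam_level_stable dC (ltnW NM)).
apply/eqP; rewrite eq_le ge_sup //=; last by exists (lam_level C N), N.
apply: sup_upper_bound; last by exists N.
by split; [exists (lam_level C N), N|exists (lam_level C N)].
Qed.

Lemma lam_setID C D : cylindrical C -> cylindrical D ->
  lam C = lam (C `&` D) + lam (C `&` ~` D) :> R.
Proof.
move=> [N0 dC0] [M0 dD0]; set N := maxn N0 M0.
have dC := decidedW (leq_maxl N0 M0) dC0; have dD := decidedW (leq_maxr N0 M0) dD0.
rewrite (lam_decided dC) (lam_decided (decidedI dC dD)).
rewrite (lam_decided (decidedI dC (decidedC dD))) /lam_level -mulrDl -natrD !ncylE.
have -> : inner_words C N = inner_words (C `&` D) N :|: inner_words (C `&` ~` D) N.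
  apply/setP => s; rewrite !inE; apply/asboolP/orP => [sC|[]/asboolP sCD t /sCD[] //].
  by case: (dD s) => sD; [left|right]; apply/asboolP => t st; split;
    [exact: sC|exact: sD|exact: sC|exact: sD].
rewrite cardsU.
suff -> : inner_words (C `&` D) N :&: inner_words (C `&` ~` D) N = finset.set0.
  by rewrite cards0 subn0.
apply/setP => s; rewrite !inE; apply/negbTE/negP => /andP[/asboolP sD /asboolP snD].
by have [_ +] := sD _ (cyl_word_point s); have [_] := snD _ (cyl_word_point s).
Qed.

Lemma lam_ge0 C : cylindrical C -> 0 <= lam C :> R.
Proof. by move=> [N dC]; rewrite (lam_decided dC) lam_level_ge0. Qed.

Lemma le_lam C D : cylindrical C -> cylindrical D -> C `<=` D -> lam C <= lam D :> R.
Proof.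
move=> cC cD CD; rewrite (lam_setID cD cC) setIidr // lerDl.
exact/lam_ge0/cylindricalI/cylindricalC.
Qed.

Lemma lam_setU_le C D : cylindrical C -> cylindrical D ->
  lam (C `|` D) <= lam C + lam D :> R.
Proof.
move=> cC cD; have cCD := cylindricalU cC cD.
rewrite (lam_setID cCD cC) setIidr; last exact: subsetUl.
rewrite lerD2l; apply: le_lam (cylindricalI cCD (cylindricalC cC)) cD _.
by move=> t [[]].
Qed.

Lemma lam0 : lam set0 = 0 :> R.
Proof.
have d0 : decided set0 0 by move=> s; right => t _ [].
rewrite (lam_decided d0) /lam_level ncylE.
suff -> : inner_words set0 0 = finset.set0 by rewrite cards0 mul0r.
by apply/setP => s; rewrite !inE; apply/negbTE/negP => /asboolP /(_ _ (cyl_word_point s)).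
Qed.

End Lambda.

Lemma mu0 {R : realType} : mu set0 = 0 :> R.
Proof. by apply: cvg_lim => //; under eq_fun do rewrite lam0; exact: cvg_cst. Qed.

Section SetAlgebra.
Context {F : set (set X)}.
Hypothesis algF : set_algebra F.

Lemma set_algebraT : F setT. Proof. by case: algF. Qed.

Lemma set_algebraC A : F A -> F (~` A). Proof. by case: algF => _ + _; apply. Qed.

Lemma set_algebraU A B : F A -> F B -> F (A `|` B).
Proof. by case: algF => _ _; apply. Qed.

Lemma set_algebraI A B : F A -> F B -> F (A `&` B).
Proof.
move=> FA FB; rewrite -[A `&` B]setCK setCI.
by apply/set_algebraC/set_algebraU; exact: set_algebraC.
Qed.

Lemma set_algebra0 : F set0.
Proof. by rewrite -setCT; exact/set_algebraC/set_algebraT. Qed.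

End SetAlgebra.

Lemma set_algebra_gen G : set_algebra (gen_algebra G).
Proof.
split=> [F [[]] //|A GA F [algF GF]|A B GA GB F [algF GF]].
- by apply: (set_algebraC algF); exact: GA.
- by apply: (set_algebraU algF); [exact: GA|exact: GB].
Qed.

Section AdmissibleAlgebra.
Context {R : realType} {B : set (set X)}.
Hypothesis admB : admissible_algebra (R := R) B.

Lemma cylindrical_sect G : B G -> forall n, cylindrical (sect G n).
Proof. by move=> /admB.2[+ _] n => /(_ n) /clopen_cylindrical. Qed.

Lemma lam_sect_cvg G : B G -> (fun n => lam (sect G n) : R) @ \oo --> mu G.
Proof. by move=> /admB.2[_ [l l_cvg]]; rewrite /mu (cvg_lim _ l_cvg). Qed.

Lemma le_mu G H : B G -> B H -> G `<=` H -> mu G <= mu H :> R.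
Proof.
move=> BG BH GH; apply: ler_lim; [exact: cvgP (lam_sect_cvg BG)|
  exact: cvgP (lam_sect_cvg BH)|].
by apply: nearW => n; apply: le_lam; [exact: cylindrical_sect..|move=> t /GH].
Qed.

Lemma mu_setU_le G H : B G -> B H -> mu (G `|` H) <= mu G + mu H :> R.
Proof.
move=> BG BH.
have GH_cvg : (fun n => lam (sect G n) + lam (sect H n) : R) @ \oo --> mu G + mu H.
  by apply: cvgD; exact: lam_sect_cvg.
rewrite -(cvg_lim _ GH_cvg) //; apply: ler_lim.
- exact: cvgP (lam_sect_cvg (set_algebraU admB.1 BG BH)).
- exact: cvgP GH_cvg.
- by apply: nearW => n; apply: lam_setU_le; exact: cylindrical_sect.
Qed.

Lemma Nseq_small Bs (d : R) : Nseq (R := R) B Bs -> 0 < d -> exists k, mu (Bs k) <= d.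
Proof.
move=> [_ [_ /cvgrPdist_le/(_ d)]] /[apply] -[k _ kd].
by exists k; have /ler_distlCDr := kd k (leqnn k); rewrite add0r.
Qed.

Lemma Nseq_set0 : Nseq (R := R) B (fun=> set0).
Proof.
rewrite /Nseq /=; split; first by move=> _; exact: set_algebra0 admB.1.
by split=> [_ //|]; rewrite mu0; exact: cvg_cst.
Qed.

End AdmissibleAlgebra.

Definition adjoin (B : set (set X)) (A : set X) : set (set X) :=
  [set G | exists C1 C2, [/\ B C1, B C2 & G = (A `&` C1) `|` (~` A `&` C2)]].

Section Adjoin.
Context {B : set (set X)} (A : set X).
Hypothesis algB : set_algebra B.

Lemma set_algebra_adjoin : set_algebra (adjoin B A).
Proof.
split.
- exists setT, setT; split; [exact: set_algebraT..|].
  by apply/seteqP; split=> x /=; have := pselect (A x); tauto.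
- move=> _ [C1 [C2 [BC1 BC2 ->]]]; exists (~` C1), (~` C2).
  split; [exact: set_algebraC..|].
  by apply/seteqP; split=> x /=; have := pselect (A x); tauto.
- move=> _ _ [C1 [C2 [BC1 BC2 ->]]] [C3 [C4 [BC3 BC4 ->]]].
  exists (C1 `|` C3), (C2 `|` C4); split; [exact: set_algebraU..|].
  by apply/seteqP; split=> x /=; tauto.
Qed.

Lemma gen_algebra_sub_adjoin : gen_algebra (B `|` [set A]) `<=` adjoin B A.
Proof.
apply: smallest_sub; first exact: set_algebra_adjoin.
move=> G [BG|->].
  by exists G, G; split=> //; apply/seteqP; split=> x /=; have := pselect (A x); tauto.
exists setT, set0; split; [exact: set_algebraT|exact: set_algebra0|].
by apply/seteqP; split=> x /=; tauto.
Qed.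

End Adjoin.

Lemma lam_adjoin {R : realType} (P Q1 Q2 : set cantor_space) :
  cylindrical P -> cylindrical Q1 -> cylindrical Q2 ->
  lam ((P `&` Q1) `|` (~` P `&` Q2)) = lam (P `&` Q1) + (lam Q2 - lam (P `&` Q2)) :> R.
Proof.
move=> cP cQ1 cQ2.
have cQ := cylindricalU (cylindricalI cP cQ1) (cylindricalI (cylindricalC cP) cQ2).
rewrite (lam_setID cQ cP) (lam_setID cQ2 cP).
have -> : (P `&` Q1 `|` ~` P `&` Q2) `&` P = P `&` Q1.
  by apply/seteqP; split=> x /=; tauto.
have -> : (P `&` Q1 `|` ~` P `&` Q2) `&` ~` P = Q2 `&` ~` P.
  by apply/seteqP; split=> x /=; tauto.
by rewrite [Q2 `&` P]setIC; ring.
Qed.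

Lemma admissible_algebra_adjoin {R : realType} (B : set (set X)) (A : set X) :
  admissible_algebra (R := R) B -> (forall C, B C -> admissible (R := R) (A `&` C)) ->
  admissible_algebra (R := R) (gen_algebra (B `|` [set A])).
Proof.
move=> admB admAC; split; first exact: set_algebra_gen.
have clopenA n : clopen (sect A n).
  by have [+ _] := admAC _ (set_algebraT admB.1); rewrite setIT; apply.
have clopenB G n : B G -> clopen (sect G n) by move=> /admB.2[].
move=> _ /(gen_algebra_sub_adjoin admB.1)[C1 [C2 [BC1 BC2 ->]]]; split=> [n|].
  change (clopen ((sect A n `&` sect C1 n) `|` (~` sect A n `&` sect C2 n))).
  by apply: clopenU; apply: clopenI;
    [exact: clopenA|exact: clopenB|exact: (@clopenC _ _ set0 (clopenA n))|exact: clopenB].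
have [[_ [l1 l1_cvg]] [_ [l2 l2_cvg]]] := (admAC _ BC1, admAC _ BC2).
exists (l1 + (mu C2 - l2)).
have -> : (fun n => lam (sect ((A `&` C1) `|` (~` A `&` C2)) n) : R) =
    (fun n => lam (sect (A `&` C1) n) + (lam (sect C2 n) - lam (sect (A `&` C2) n))).
  apply/funext => n; have cyl G : B G -> cylindrical (sect G n).
    by move=> /clopenB/clopen_cylindrical.
  exact: (lam_adjoin (clopen_cylindrical (clopenA n)) (cyl _ BC1) (cyl _ BC2)).
exact: cvgD l1_cvg (cvgB (lam_sect_cvg admB BC2) l2_cvg).
Qed.

Lemma countable_enum T (A : set T) (a : T) : countable A ->
  exists e : nat -> T, range e `<=` A `|` [set a] /\ A `<=` range e.
Proof.
move=> /countable_injP[f f_inj].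
pose e n := if pselect (exists2 x, A x & f x = n) is left p then sval (cid2 p) else a.
exists e; split.
  by move=> _ [n _ <-]; rewrite /e; case: pselect => [p|_]; [left; case: cid2|right].
move=> x Ax; exists (f x) => //; rewrite /e; case: pselect => [p|[]]; last by exists x.
by case: cid2 => y Ay /= fyx; apply: f_inj; rewrite ?in_setE.
Qed.

Fixpoint slow_index (NN : nat -> nat) (n : nat) : nat :=
  if n is n'.+1 then
    if (NN (slow_index NN n').+1 <= n)%N then (slow_index NN n').+1
    else slow_index NN n'
  else 0.

Section SlowIndex.
Variable NN : nat -> nat.
Local Notation ff := (slow_index NN).

Lemma slow_index_reached n : ff n = 0%N \/ (NN (ff n) <= n)%N.
Proof.
elim: n => [|n IH]; first by left.
by rewrite /=; case: ifP => [|_]; [right|case: IH => [->|/leqW]; [left|right]].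
Qed.

Lemma slow_index_homo : {homo ff : m n / (m <= n)%N}.
Proof. by apply: homo_leq leq_trans _ => // n /=; case: ifP. Qed.

Lemma slow_index_oo J : \forall n \near \oo, (J <= ff n)%N.
Proof.
elim: J => [|J [M _ MJ]]; first exact: nearW.
pose n0 := maxn M (NN J.+1).
have J_le : (J <= ff n0)%N by apply: MJ; exact: leq_maxl.
have [J_lt|] := ltnP J (ff n0).
  by exists n0 => // n /slow_index_homo; apply: leq_trans J_lt.
rewrite leq_eqVlt ltnNge J_le orbF => /eqP ffJ.
exists n0.+1 => // n /slow_index_homo; apply: leq_trans.
by rewrite /= ffJ ifT //; apply: leqW; exact: leq_maxr.
Qed.

Lemma slow_index_reached_oo : \forall n \near \oo, (NN (ff n) <= n)%N.
Proof.
by apply: filterS (slow_index_oo 1) => n; case: (slow_index_reached n) => // ->.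
Qed.

End SlowIndex.

Lemma small_chain {R : realType} (B : set (set X)) (S : set (nat -> set X)) (eps : R) :
  admissible_algebra (R := R) B -> countable S -> S `<=` Nseq (R := R) B -> 0 < eps ->
  exists D : nat -> set X,
    [/\ forall J, B (D J), {homo D : J K / (J <= K)%N >-> J `<=` K},
        forall J, mu (D J) <= eps & forall Bs, S Bs -> exists k J, Bs k `<=` D J].
Proof.
move=> admB cS SN eps_gt0.
have [e [eS Se]] := countable_enum (fun=> set0) cS.
have Ne j : Nseq (R := R) B (e j).
  by case: (eS _ (imageT e j)) => [/SN //|->]; exact: Nseq_set0 admB.
have small j : exists kj, mu (e j kj) <= eps / 2 ^+ j.+1.
  by apply: Nseq_small (Ne j) _; rewrite divr_gt0 // exprn_gt0.
have [k ke] := boolp.choice small.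
pose b j := e j (k j); pose D J := \big[setU/set0]_(j < J) b j.
have BD J : B (D J).
  apply: (big_ind B) => [|G H BG BH|j _]; first exact: set_algebra0 admB.1.
    exact: (set_algebraU admB.1 BG BH).
  by case: (Ne j) => + _; apply.
have muD J : mu (D J) <= eps - eps / 2 ^+ J.
  elim: J => [|J IH]; first by rewrite /D big_ord0 mu0 expr0 divr1 subrr.
  rewrite /D big_ord_recr /=; apply: le_trans (mu_setU_le admB (BD J) _) _.
    by case: (Ne J) => + _; apply.
  have halve : eps / 2 ^+ J = 2 * (eps / 2 ^+ J.+1).
    by rewrite exprS; field; rewrite expf_neq0 // pnatr_eq0.
  by have := ke J; rewrite halve in IH; lra.
exists D; split => //.
- exact: subset_bigsetU.
- move=> J; apply: le_trans (muD J) _; rewrite gerBl divr_ge0 ?exprn_ge0 //.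
  exact: ltW.
- by move=> _ /Se[j _ <-]; exists (k j), j.+1; exact: bigsetU_sup.
Qed.

Section Diagonal.
Context {R : realType} (B : set (set X)) (e D : nat -> set X).
Hypotheses (admB : admissible_algebra (R := R) B) (Be : forall i, B (e i)).
Hypotheses (BD : forall J, B (D J)) (D_homo : {homo D : J K / (J <= K)%N >-> J `<=` K}).

Let BDe J i : B (D J `&` e i) := set_algebraI admB.1 (BD J) (Be i).

Let m J i : R := mu (D J `&` e i).

Lemma has_sup_m i : has_sup (range (m^~ i)).
Proof.
split; first by exists (m 0 i), 0%N.
exists (mu (e i)) => _ [J _ <-].
by apply: (le_mu admB (BDe J i) (Be i)) => p [].
Qed.

Let L i := sup (range (m^~ i)).

Lemma thresholds_exist : exists NN : nat -> nat, forall J i n, (i <= J)%N ->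
  (NN J <= n)%N -> lam (sect (D J `&` e i) n) <= m J i + J.+1%:R^-1.
Proof.
suff threshold J : exists N, forall i n, (i <= J)%N -> (N <= n)%N ->
    lam (sect (D J `&` e i) n) <= m J i + J.+1%:R^-1.
  by have [NN NNP] := boolp.choice threshold; exists NN.
have : \forall n \near \oo, forall i : 'I_J.+1,
    lam (sect (D J `&` e i) n) <= m J i + J.+1%:R^-1.
  apply: filter_forall => i.
  have /cvgrPdist_le/(_ J.+1%:R^-1) := lam_sect_cvg admB (BDe J i).
  rewrite invr_gt0 ltr0n => /(_ isT).
  by apply: filterS => n /ler_distlCDr.
by case=> N _ NJ; exists N => i n iJ /NJ /(_ (Ordinal (iJ : (i < J.+1)%N))).
Qed.

Section DiagonalLimit.
Variable NN : nat -> nat.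
Hypothesis NN_thresholds : forall J i n, (i <= J)%N ->
  (NN J <= n)%N -> lam (sect (D J `&` e i) n) <= m J i + J.+1%:R^-1.

Let u i n : R := lam (sect (D (slow_index NN n) `&` e i) n).

Lemma diagonal_lower i d : 0 < d -> \forall n \near \oo, L i - d <= u i n.
Proof.
move=> d_gt0; have d2_gt0 : 0 < d / 2 by rewrite divr_gt0.
have [_ [J _ <-] LJ] := sup_adherent d2_gt0 (has_sup_m i).
near=> n.
have mJ : m J i - d / 2 <= lam (sect (D J `&` e i) n).
  near: n; have /cvgrPdist_le/(_ _ d2_gt0) := lam_sect_cvg admB (BDe J i).
  by apply: filterS => n; rewrite ler_distlC => /andP[].
have : lam (sect (D J `&` e i) n) <= u i n.
  have cyl_Dn K : cylindrical (sect (D K `&` e i) n) := cylindrical_sect admB (BDe K i) n.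
  apply: le_lam (cyl_Dn J) (cyl_Dn _) _ => t [Dt et]; split=> //.
  by apply: D_homo Dt; near: n; exact: slow_index_oo.
by rewrite /L in LJ *; lra.
Unshelve. all: by end_near.
Qed.

Lemma diagonal_upper i d : 0 < d -> \forall n \near \oo, u i n <= L i + d.
Proof.
move=> d_gt0; have [k kd] := ltr_add_invr d_gt0; rewrite add0r in kd.
near=> n.
have ik : (maxn i k <= slow_index NN n)%N by near: n; exact: slow_index_oo.
have NNn : (NN (slow_index NN n) <= n)%N by near: n; exact: slow_index_reached_oo.
apply: le_trans (NN_thresholds (leq_trans (leq_maxl _ _) ik) NNn) _.
apply: lerD; first by apply: sup_upper_bound; [exact: has_sup_m|exists (slow_index NN n)].
apply: le_trans (ltW kd); rewrite lef_pV2 ?posrE ?ltr0n // ler_nat ltnS.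
exact: leq_trans (leq_maxr _ _) ik.
Unshelve. all: by end_near.
Qed.

Lemma diagonal_cvg i : u i @ \oo --> L i.
Proof.
apply/cvgrPdist_le => d d_gt0.
apply: filterS2 (diagonal_lower i d_gt0) (diagonal_upper i d_gt0) => n lb ub.
by rewrite ler_distlC lb ub.
Qed.

End DiagonalLimit.

Hypothesis e_onto : B `<=` range e.

Lemma diagonal_set (eps : R) : (forall J, mu (D J) <= eps) ->
  exists ff : nat -> nat, [/\ forall J, \forall n \near \oo, (J <= ff n)%N,
    forall C, B C -> admissible (R := R) ([set p | D (ff p.1) p] `&` C) &
    mu (R := R) [set p | D (ff p.1) p] <= eps].
Proof.
move=> Deps; have [NN NNP] := thresholds_exist.
exists (slow_index NN); split; first exact: slow_index_oo.
  move=> C /e_onto[i _ <-]; split=> [n|].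
    exact: (admB.2 _ (BDe (slow_index NN n) i)).1 n.
  by exists (L i); exact: diagonal_cvg.
have [iT _ eT] := e_onto (set_algebraT admB.1).
have A_cvg : (fun n => lam (sect [set p | D (slow_index NN p.1) p] n) : R) @ \oo --> L iT.
  by have := diagonal_cvg NNP (i := iT); rewrite eT; under eq_fun do rewrite setIT.
rewrite /mu (cvg_lim _ A_cvg) //; apply: ge_sup; first by exists (m 0 iT), 0%N.
by move=> _ [J _ <-]; rewrite /m eT setIT.
Qed.

End Diagonal.

Theorem lemma2p5 (R : realType) (B : set (set X)) (S : set (nat -> set X))
    (eps : R) :
  countable B -> admissible_algebra (R := R) B ->
  countable S -> S `<=` Nseq (R := R) B -> 0 < eps ->
  exists A : set X,
    [/\ admissible_algebra (R := R) (gen_algebra (B `|` [set A])),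
        (forall Bs, S Bs -> exists k0 : nat, exists m : nat,
           forall n, (m <= n)%N -> sect (Bs k0) n `<=` sect A n) &
        mu (R := R) A <= eps].
Proof.
move=> cB admB cS SN eps_gt0.
have [D [BD D_homo Deps SD]] := small_chain admB cS SN eps_gt0.
have [e [e_range e_onto]] := countable_enum setT cB.
have Be i : B (e i).
  by case: (e_range _ (imageT e i)) => [//|->]; exact: set_algebraT admB.1.
have [ff [ff_oo admAC muA]] := diagonal_set admB Be BD D_homo e_onto Deps.
exists [set p | D (ff p.1) p]; split=> //; first exact: admissible_algebra_adjoin.
move=> Bs /SD[k [J BsD]]; exists k; have [M _ MJ] := ff_oo J.
by exists M => n /MJ Jff t /BsD; exact: D_homo.
Qed.
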